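(* Let $n\geqslant 2$ be an integer. Every tournament $T$ with $2n$ vertices that embeds a transitive tournament with $2n-1$ vertices is decomposable.
   Context: A tournament $T=(V,A)$ is a finite set $V$ with a set $A$ of ordered pairs of distinct vertices such that for all $x\neq y$, exactly one of $(x,y),(y,x)$ lies in $A$; write $x\to y$ for $(x,y)\in A$. For $X\subseteq V$, $T[X]$ is the induced subtournament. $T$ embeds $T'$ if $T'$ is isomorphic to an induced subtournament of $T$. A tournament is transitive if $x\to y$ and $y\to z$ imply $x\to z$. A subset $I\subseteq V$ is an interval of $T$ if for every $x\in V\setminus I$, either $x\to a$ for all $a\in I$ or $a\to x$ for all $a\in I$. The sets $\varnothing$, $V$ and singletons are trivial intervals. A tournament with at least 3 vertices is indecomposable if all its intervals are trivial, and decomposable otherwise. *)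

From mathcomp Require Import all_boot.
Set Implicit Arguments. Unset Strict Implicit. Unset Printing Implicit Defensive.

Definition is_tournament (V : finType) (arc : rel V) : Prop :=
  (forall x, ~~ arc x x) /\
  (forall x y, x != y -> (arc x y && ~~ arc y x) || (arc y x && ~~ arc x y)).

Definition is_transitive (V : finType) (arc : rel V) : Prop :=
  forall x y z, arc x y -> arc y z -> arc x z.

Definition embeds (V W : finType) (arc : rel V) (arc' : rel W) : Prop :=
  exists f : W -> V, injective f /\ forall a b, arc (f a) (f b) = arc' a b.

Definition is_interval (V : finType) (arc : rel V) (I : {set V}) : Prop :=
  forall x, x \notin I ->
    (forall a, a \in I -> arc x a) \/ (forall a, a \in I -> arc a x).

Definition trivial_set (V : finType) (I : {set V}) : Prop :=
  I = set0 \/ I = [set: V] \/ exists v, I = [set v].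

Definition decomposable (V : finType) (arc : rel V) : Prop :=
  3 <= #|V| /\ exists I : {set V}, is_interval arc I /\ ~ trivial_set I.

From mathcomp Require Import all_boot.
From mathcomp Require Import zify.

Set Implicit Arguments.
Unset Strict Implicit.
Unset Printing Implicit Defensive.

(* Order the embedded transitive subtournament as a chain v_0 -> v_1 -> ... -> v_(m-1),
   m = 2n - 1, and let x be the remaining vertex.  If x sees two consecutive v_i, v_(i+1)
   the same way, then {v_i, v_(i+1)} is an interval.  Otherwise the arcs between x and
   the chain alternate in direction, and since m is odd, x sees v_0 and v_(m-1) the same
   way: either v_0 beats every other vertex or v_(m-1) is beaten by every other vertex,
   and removing it leaves an interval. *)

Lemma alternating_path_last (T : Type) (g : T -> bool) (x0 : T) (s : seq T) :
  path [rel a b | g a != g b] x0 s -> g (last x0 s) = g x0 (+) odd (size s).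
Proof.
elim: s x0 => [|y s IHs] x0 /=; first by rewrite addbF.
by case/andP=> + /IHs ->; case: (g x0); case: (g y); case: odd.
Qed.

Lemma not_sorted_split (T : Type) (r : rel T) (s : seq T) : ~~ sorted r s ->
  exists s1 a b s2, s = s1 ++ a :: b :: s2 /\ ~~ r a b.
Proof.
elim: s => [//|a [//|b s] IHs] /=.
case: (boolP (r a b)) => [_ /IHs [s1 [c [d [s2 [-> r_cd]]]]]|r_ab _].
  by exists (a :: s1), c, d, s2.
by exists [::], a, b, s.
Qed.

Lemma exists_notin_seq (T : finType) (s : seq T) :
  size s < #|T| -> exists x, x \notin s.
Proof.
move=> size_s; apply/existsP; apply: contraTT size_s => /existsPn all_in.
rewrite -leqNgt; apply: leq_trans (card_size s).
by apply/subset_leq_card/subsetP => y _; apply/negPn/all_in.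
Qed.

Lemma transitive_tournament_chain (W : finType) (arc : rel W) :
  is_tournament arc -> is_transitive arc ->
  exists2 t : seq W, pairwise arc t & size t = #|W|.
Proof.
move=> [_ arcT] arc_trans; pose le a b := (a == b) || arc a b.
have le_total : total le.
  move=> a b; rewrite /le; have [->//|/arcT] := eqVneq a b.
  by case: (arc a b); case: (arc b a).
have le_trans : transitive le.
  move=> b a c; rewrite /le => /orP[/eqP-> //|ab] /orP[/eqP<-|bc].
    by rewrite ab orbT.
  by rewrite (arc_trans _ _ _ ab bc) orbT.
exists (sort le (enum W)); last by rewrite size_sort -cardE.
have: pairwise [rel a b | le a b && (a != b)] (sort le (enum W)).
  rewrite pairwise_relI -sorted_pairwise // sort_sorted //.
  by rewrite -uniq_pairwise sort_uniq enum_uniq.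
by apply: sub_pairwise => a b /andP[]; rewrite /le => /orP[/eqP->|//]; rewrite eqxx.
Qed.

Section Intervals.

Variables (V : finType) (arc : rel V).

Lemma nontrivial_card (I : {set V}) : 2 <= #|I| < #|V| -> ~ trivial_set I.
Proof.
move=> /andP[I2 IV] [|[|[v]]] I_eq; move: I2 IV; rewrite I_eq.
- by rewrite cards0.
- by rewrite cardsT ltnn.
- by rewrite cards1.
Qed.

Lemma decomposable_extreme_vertex (v : V) : 3 <= #|V| ->
  (forall y, y != v -> arc v y) \/ (forall y, y != v -> arc y v) ->
  decomposable arc.
Proof.
move=> V3 v_extreme; split=> //; exists [set~ v]; split.
  move=> y; rewrite !inE negbK => /eqP ->.
  case: v_extreme => [v_src|v_snk]; [left|right] => a; rewrite !inE.
    exact: v_src.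
  exact: v_snk.
by apply: nontrivial_card; rewrite cardsC1; lia.
Qed.

Hypothesis arcT : is_tournament arc.

Lemma tournament_arcC (a b : V) : a != b -> arc a b = ~~ arc b a.
Proof. by move/arcT.2; case: (arc a b); case: (arc b a). Qed.

Lemma decomposable_twins (a b : V) : 3 <= #|V| -> a != b ->
  (forall y, y != a -> y != b -> arc y a = arc y b) -> decomposable arc.
Proof.
move=> V3 ab twins; split=> //; exists [set a; b]; split.
  move=> y; rewrite !inE => /norP[ya yb].
  case: (boolP (arc y a)) => [ya_arc|ay_arc]; [left|right] => c;
    rewrite !inE => /orP[]/eqP ->.
  - exact: ya_arc.
  - by rewrite -twins.
  - by rewrite tournament_arcC 1?eq_sym.
  - by rewrite tournament_arcC 1?eq_sym // -twins.
by apply: nontrivial_card; rewrite cards2 ab.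
Qed.

End Intervals.

Section ChainPlusVertex.

Variables (V : finType) (arc : rel V) (s : seq V) (x : V).
Hypotheses (arcT : is_tournament arc) (s_chain : pairwise arc s)
  (x_notin_s : x \notin s) (card_V : #|V| = (size s).+1) (s_gt1 : 1 < size s).

Let card_V_ge3 : 3 <= #|V|. Proof. by rewrite card_V. Qed.

Lemma chain_cover (y : V) : y != x -> y \in s.
Proof.
move=> yx; apply: contraT => y_notin_s.
have: uniq [:: y, x & s].
  rewrite /= !inE negb_or yx y_notin_s x_notin_s.
  exact: pairwise_uniq (fun a => negbTE (arcT.1 a)) s_chain.
move/card_uniqP=> card_yxs; have := max_card (mem [:: y, x & s]).
by rewrite card_yxs card_V /= ltnn.
Qed.

Lemma decomposable_chain_source (a : V) (s' : seq V) :
  s = a :: s' -> arc a x -> decomposable arc.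
Proof.
move=> s_eq ax; apply: (@decomposable_extreme_vertex _ _ a) => //; left => y ya.
have [->|yx] := eqVneq y x; first exact: ax.
move: (chain_cover yx) s_chain.
rewrite s_eq inE (negbTE ya) pairwise_cons.
by move=> y_s' /andP[/allP extreme _]; apply: extreme.
Qed.

Lemma decomposable_chain_sink (s' : seq V) (b : V) :
  s = rcons s' b -> arc x b -> decomposable arc.
Proof.
move=> s_eq xb; apply: (@decomposable_extreme_vertex _ _ b) => //; right => y yb.
have [->|yx] := eqVneq y x; first exact: xb.
move: (chain_cover yx) s_chain.
rewrite s_eq mem_rcons inE (negbTE yb) pairwise_rcons.
by move=> y_s' /andP[/allP extreme _]; apply: extreme.
Qed.

Lemma decomposable_chain_twins (s1 s2 : seq V) (a b : V) :
  s = s1 ++ a :: b :: s2 -> arc x a = arc x b -> decomposable arc.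
Proof.
move=> s_eq xab; move: s_chain; rewrite s_eq pairwise_cat /=.
case/and5P=> /allrelP before _ /andP[ab /allP a_s2] /allP b_s2 _.
apply: (@decomposable_twins V arc arcT a b card_V_ge3).
  by apply: contraTneq ab => ->; rewrite (negbTE (arcT.1 b)).
move=> y ya yb; have [->|yx] := eqVneq y x; first exact: xab.
move: (chain_cover yx); rewrite s_eq mem_cat !inE (negbTE ya) (negbTE yb) /=.
case/orP=> [y_s1|y_s2].
  by rewrite (before y a) ?(before y b) // !inE eqxx ?orbT.
by rewrite (tournament_arcC arcT ya) (tournament_arcC arcT yb) a_s2 ?b_s2.
Qed.

Lemma decomposable_odd_chain : odd (size s) -> decomposable arc.
Proof.
move=> s_odd; case: (boolP (sorted [rel a b | arc x a != arc x b] s)) => [alt|].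
  case s_eq: s s_odd alt => [//|a s'] /= s'_even.
  move/(alternating_path_last (g := arc x)).
  rewrite (negbTE s'_even) addbF => x_last.
  case x_a: (arc x a).
    apply: (@decomposable_chain_sink (belast a s') (last a s')).
      by rewrite -lastI.
    by rewrite x_last.
  apply: (@decomposable_chain_source a s') => //; rewrite tournament_arcC ?x_a //.
  by apply: contraNneq x_notin_s => <-; rewrite s_eq mem_head.
case/not_sorted_split=> [s1 [a [b [s2 [s_eq /negPn /eqP]]]]].
exact: decomposable_chain_twins s_eq.
Qed.

End ChainPlusVertex.

Theorem mainTheorem1 (n : nat) (hn : 2 <= n) (V : finType) (arc : rel V) :
  is_tournament arc -> #|V| = 2 * n ->
  (exists arc' : rel 'I_(2 * n - 1),
      is_tournament arc' /\ is_transitive arc' /\ embeds arc arc') ->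
  decomposable arc.
Proof.
move=> arcT card_V [arc' [arcT' [arc'_trans [f [_ f_hom]]]]].
have [t t_chain size_t] := transitive_tournament_chain arcT' arc'_trans.
have s_chain : pairwise arc (map f t).
  by rewrite pairwise_map; apply: sub_pairwise t_chain => a b; rewrite /= f_hom.
have size_s : size (map f t) = 2 * n - 1 by rewrite size_map size_t card_ord.
have [x x_notin_s] : exists x, x \notin map f t.
  by apply: exists_notin_seq; rewrite size_s card_V; lia.
by apply: (decomposable_odd_chain arcT s_chain x_notin_s); rewrite size_s; lia.
Qed.
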